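(* Let $(A,B)$ be a finite-dimensional even-symmetric associative superalgebra over an algebraically closed field $\mathbb{K}$ of characteristic zero such that $A_{\bar 0}$ is a semi-simple $A_{\bar 0}$-bimodule. If $\mathrm{Ann}(A)=\{0\}$, then $A$ is an orthogonal direct sum of simple even-symmetric associative superalgebras, i.e. $A=A_1\oplus\cdots\oplus A_m$ where the $A_k$ are pairwise $B$-orthogonal graded two-sided ideals, each simple as an associative superalgebra, with $B|_{A_k\times A_k}$ non-degenerate.
   Context: A superalgebra is $\mathbb{Z}_2$-graded, $A=A_{\bar 0}\oplus A_{\bar 1}$, $A_\alpha A_\beta\subseteq A_{\alpha+\beta}$. An even-symmetric structure on $A$ is a bilinear form $B$ with $B(A_{\bar 0},A_{\bar 1})=B(A_{\bar 1},A_{\bar 0})=0$ which is supersymmetric ($B(x,y)=(-1)^{|x||y|}B(y,x)$), associative ($B(xy,z)=B(x,yz)$) and non-degenerate. A superalgebra is simple if its product is non-zero and it has no graded two-sided ideals other than $\{0\}$ and itself. $A_{\bar 0}$ is an $A_{\bar 0}$-bimodule via multiplication, semi-simple if every sub-bimodule has a complementary sub-bimodule. $\mathrm{Ann}(A)=\{x: xA=Ax=\{0\}\}$. *)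

(* A finite-dimensional (not necessarily unital) associative
   superalgebra over K is modelled as a finite-dimensional K-vector space
   V : vectType K with a bilinear multiplication [mul] and a Z_2-grading
   given by two subspaces [Ag false] (= A_0bar) and [Ag true] (= A_1bar). *)
From HB Require Import structures.
From mathcomp Require Import all_boot all_order all_algebra.
Set Implicit Arguments. Unset Strict Implicit. Unset Printing Implicit Defensive.
Import GRing.Theory.
Local Open Scope ring_scope.

Section SuperAlg.
Variables (K : fieldType) (V : vectType K).

Definition bilinear_mul (mul : V -> V -> V) : Prop :=
  (forall (a : K) (x y z : V), mul (a *: x + y) z = a *: mul x z + mul y z) /\
  (forall (a : K) (x y z : V), mul x (a *: y + z) = a *: mul x y + mul x z).

Definition assoc_mul (mul : V -> V -> V) : Prop :=
  forall x y z : V, mul (mul x y) z = mul x (mul y z).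

Definition is_grading (mul : V -> V -> V) (Ag : bool -> {vspace V}) : Prop :=
  (Ag false :&: Ag true = 0)%VS /\ (Ag false + Ag true = fullv)%VS /\
  (forall (i j : bool) (x y : V), x \in Ag i -> y \in Ag j -> mul x y \in Ag (i (+) j)).

Definition bilinear_form (B : V -> V -> K) : Prop :=
  (forall (a : K) (x y z : V), B (a *: x + y) z = a * B x z + B y z) /\
  (forall (a : K) (x y z : V), B x (a *: y + z) = a * B x y + B x z).

Definition even_symmetric (mul : V -> V -> V) (Ag : bool -> {vspace V})
    (B : V -> V -> K) : Prop :=
  bilinear_form B /\
  (forall (i j : bool) (x y : V), i != j -> x \in Ag i -> y \in Ag j -> B x y = 0) /\
  (forall (i j : bool) (x y : V), x \in Ag i -> y \in Ag j ->
      B x y = (-1) ^+ (i && j) * B y x) /\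
  (forall x y z : V, B (mul x y) z = B x (mul y z)) /\
  (forall x : V, (forall y : V, B x y = 0) -> x = 0).

Definition graded (Ag : bool -> {vspace V}) (I : {vspace V}) : Prop :=
  I = (I :&: Ag false + I :&: Ag true)%VS.

Definition ideal_in (mul : V -> V -> V) (S I : {vspace V}) : Prop :=
  forall x y : V, x \in S -> y \in I -> mul x y \in I /\ mul y x \in I.

Definition simple_in (mul : V -> V -> V) (Ag : bool -> {vspace V})
    (S : {vspace V}) : Prop :=
  (exists x y : V, [/\ x \in S, y \in S & mul x y != 0]) /\
  (forall I : {vspace V}, (I <= S)%VS -> graded Ag I -> ideal_in mul S I ->
      I = 0%VS \/ I = S).

Definition sub_bimodule (mul : V -> V -> V) (A0 W : {vspace V}) : Prop :=
  (W <= A0)%VS /\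
  (forall a w : V, a \in A0 -> w \in W -> mul a w \in W /\ mul w a \in W).

Definition semisimple_even_part (mul : V -> V -> V) (A0 : {vspace V}) : Prop :=
  forall W : {vspace V}, sub_bimodule mul A0 W ->
    exists W' : {vspace V}, sub_bimodule mul A0 W' /\
      (W :&: W' = 0)%VS /\ (W + W' = A0)%VS.

Definition trivial_annihilator (mul : V -> V -> V) : Prop :=
  forall x : V, (forall y : V, mul x y = 0 /\ mul y x = 0) -> x = 0.

Definition nondeg_on (B : V -> V -> K) (S : {vspace V}) : Prop :=
  forall x : V, x \in S -> (forall y : V, y \in S -> B x y = 0) -> x = 0.

End SuperAlg.

(** Every graded ideal [I] of [A] is non-degenerate: [I ∩ I^⊥] is a graded ideal
   on which [B] vanishes, and such an ideal [N] is zero. Indeed [N N = 0] by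
   invariance of [B]; as [A_0] is a semisimple bimodule, the even part [N_0] has a
   bimodule complement [W] in [A_0], and [N_0 W + W N_0 ⊆ N_0 ∩ W = 0], so [N_0]
   annihilates [A_0]. Since [Ann(A) = 0], no nonzero vector is orthogonal to all
   products, and a parity chase with supersymmetry then shows that [N_0]
   annihilates [A], hence vanishes, and then so does the odd part of [N].
   Consequently [A = J ⊕ J^⊥] with [J J^⊥ = J^⊥ J = 0] for every graded ideal [J],
   so the ideals of [J] are ideals of [A]; a minimal nonzero graded ideal is thus
   simple, and induction on the dimension splits [A] orthogonally into such
   ideals. *)

From HB Require Import structures.
From mathcomp Require Import all_boot all_order all_algebra.
From Stdlib Require Import Classical.
Set Implicit Arguments. Unset Strict Implicit. Unset Printing Implicit Defensive.
Import GRing.Theory.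
Local Open Scope ring_scope.

Section MinimalSubspace.
Variables (K : fieldType) (V : vectType K).

Lemma minimal_subv_exists (P : {vspace V} -> Prop) (X : {vspace V}) : P X ->
  exists J : {vspace V},
    [/\ (J <= X)%VS, P J & forall Y, P Y -> (Y <= J)%VS -> Y = J].
Proof.
move=> PX; have [n ltXn] := ubnP (\dim X); elim: n X ltXn PX => // n IH X ltXn PX.
have [[Y [PY sYX nYX]] | noY] :=
  classic (exists Y, [/\ P Y, (Y <= X)%VS & Y <> X]).
  have ltYn : (\dim Y < n)%N.
    rewrite -ltnS; apply: leq_trans ltXn; rewrite ltnS.
    by rewrite (ltn_leqif (dimv_leqif_eq sYX)); apply/eqP.
  have [J [sJY PJ minJ]] := IH Y ltYn PY.
  by exists J; split=> //; apply: subv_trans sYX.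
exists X; split=> // Y PY sYX; by apply: NNPP => nYX; apply: noY; exists Y.
Qed.

End MinimalSubspace.

Section Decomposition.
Variables (K : fieldType) (V : vectType K) (mul : V -> V -> V)
  (Ag : bool -> {vspace V}) (B : V -> V -> K).
Hypotheses (bm : bilinear_mul mul) (am : assoc_mul mul) (gr : is_grading mul Ag)
  (es : even_symmetric mul Ag B) (ss : semisimple_even_part mul (Ag false))
  (ta : trivial_annihilator mul).

Lemma mulDl x y z : mul (x + y) z = mul x z + mul y z.
Proof. by have := bm.1 1 x y z; rewrite !scale1r. Qed.

Lemma mulDr x y z : mul x (y + z) = mul x y + mul x z.
Proof. by have := bm.2 1 x y z; rewrite !scale1r. Qed.

Lemma mul0v z : mul 0 z = 0.
Proof. by apply: (addIr (mul 0 z)); rewrite -mulDl !add0r. Qed.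

Lemma formDl x y z : B (x + y) z = B x z + B y z.
Proof. by have := es.1.1 1 x y z; rewrite scale1r mul1r. Qed.

Lemma formDr x y z : B x (y + z) = B x y + B x z.
Proof. by have := es.1.2 1 x y z; rewrite scale1r mul1r. Qed.

Lemma form0v z : B 0 z = 0.
Proof. by apply: (addIr (B 0 z)); rewrite -formDl !add0r. Qed.

Lemma formv0 z : B z 0 = 0.
Proof. by apply: (addIr (B z 0)); rewrite -formDr !add0r. Qed.

Lemma formvZ a x y : B x (a *: y) = a * B x y.
Proof. by have := es.1.2 a x y 0; rewrite addr0 formv0 addr0. Qed.

Lemma mul_homog i j x y : x \in Ag i -> y \in Ag j -> mul x y \in Ag (i (+) j).
Proof. exact: gr.2.2. Qed.

Lemma form_parity i j x y : x \in Ag i -> y \in Ag j -> i != j -> B x y = 0.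
Proof. by move=> Hx Hy ij; apply: es.2.1 ij Hx Hy. Qed.

Lemma form_supersym i j x y : x \in Ag i -> y \in Ag j ->
  B x y = (-1) ^+ (i && j) * B y x.
Proof. exact: es.2.2.1. Qed.

Lemma form_nondeg x : (forall y, B x y = 0) -> x = 0.
Proof. exact: es.2.2.2.2. Qed.

Lemma formM x y z : B (mul x y) z = B x (mul y z).
Proof. exact: es.2.2.2.1. Qed.

Lemma ideal_mull I a x : ideal_in mul fullv I -> x \in I -> mul a x \in I.
Proof. by move=> iI Ix; exact: (iI a x (memvf a) Ix).1. Qed.

Lemma ideal_mulr I a x : ideal_in mul fullv I -> x \in I -> mul x a \in I.
Proof. by move=> iI Ix; exact: (iI a x (memvf a) Ix).2. Qed.

Definition hcomp (i : bool) : 'End(V) := daddv_pi (Ag i) (Ag (~~ i)).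

Lemma capv_grading i : (Ag i :&: Ag (~~ i) = 0)%VS.
Proof. by case: i; [rewrite capvC|]; exact: gr.1. Qed.

Lemma hcomp_sum x : hcomp false x + hcomp true x = x.
Proof. by apply: daddv_pi_add (capv_grading false) _; rewrite gr.2.1 memvf. Qed.

Lemma memv_hcomp i x : hcomp i x \in Ag i.
Proof. exact: memv_pi. Qed.

Lemma hcomp_id i x : x \in Ag i -> hcomp i x = x.
Proof. exact/daddv_pi_id/capv_grading. Qed.

Lemma hcomp_eq0 i x : x \in Ag (~~ i) -> hcomp i x = 0.
Proof.
case: i => Hx; have := hcomp_sum x.
  by rewrite (hcomp_id (i := false)) // => /(canRL (addKr x)); rewrite addNr.
by rewrite (hcomp_id (i := true)) // => /(canRL (addrK x)); rewrite subrr.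
Qed.

Lemma gradedP I : graded Ag I <-> forall i x, x \in I -> hcomp i x \in I.
Proof.
split=> [gI i x | hI].
  rewrite {1}gI => /memv_addP[x0 /memv_capP[I0 A0] [x1 /memv_capP[I1 A1] ->]].
  rewrite linearD /=; case: i.
    by rewrite (hcomp_id A1) (hcomp_eq0 (i := true) A0) add0r.
  by rewrite (hcomp_id A0) (hcomp_eq0 (i := false) A1) addr0.
apply: subv_anti; rewrite subv_add !capvSl !andbT; apply/subvP => x Ix.
by rewrite -[x]hcomp_sum memv_add // memv_cap hI // memv_hcomp.
Qed.

Lemma graded_fullv : graded Ag fullv.
Proof. by apply/gradedP => *; rewrite memvf. Qed.

Lemma graded_ind I (P : V -> Prop) : graded Ag I ->
  (forall x y, P x -> P y -> P (x + y)) ->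
  (forall i x, x \in I -> x \in Ag i -> P x) -> forall x, x \in I -> P x.
Proof.
move=> /gradedP gI PD Ph x Ix; rewrite -[x]hcomp_sum.
by apply: PD; apply: Ph (memv_hcomp _ _); apply: gI.
Qed.

Lemma homog_ind (P : V -> Prop) :
  (forall x y, P x -> P y -> P (x + y)) ->
  (forall i x, x \in Ag i -> P x) -> forall x, P x.
Proof.
move=> PD Ph x; apply: (graded_ind graded_fullv) (memvf x) => // i y _; exact: Ph.
Qed.

Lemma form_hcompr i x y : x \in Ag i -> B x y = B x (hcomp i y).
Proof.
rewrite -{1}[y]hcomp_sum formDr; case: i => Hx.
  by rewrite (form_parity Hx (memv_hcomp false y)) // add0r.
by rewrite (form_parity Hx (memv_hcomp true y)) // addr0.
Qed.

Lemma form_hcompl i x y : y \in Ag i -> B x y = B (hcomp i x) y.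
Proof.
rewrite -{1}[x]hcomp_sum formDl; case: i => Hy.
  by rewrite (form_parity (memv_hcomp false x) Hy) // add0r.
by rewrite (form_parity (memv_hcomp true x) Hy) // addr0.
Qed.

Lemma form_sym_eq0 i x y : x \in Ag i -> (B x y == 0) = (B y x == 0).
Proof.
move=> Hx; rewrite (form_hcompr _ Hx) (form_hcompl _ Hx).
by rewrite (form_supersym Hx (memv_hcomp i y)) mulf_eq0 signr_eq0.
Qed.

Lemma form_homog_eq0 v : (forall i y, y \in Ag i -> B v y = 0) -> v = 0.
Proof.
move=> H; apply: form_nondeg; apply: homog_ind H => y z vy vz.
by rewrite formDr vy vz addr0.
Qed.

Lemma annihilator_homog_eq0 v :
  (forall i y, y \in Ag i -> mul v y = 0 /\ mul y v = 0) -> v = 0.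
Proof.
move=> H; apply: ta; apply: homog_ind H => y z [vy yv] [vz zv].
by rewrite mulDl mulDr vy yv vz zv addr0.
Qed.

Lemma orth_products_eq0 v :
  (forall i j p q, p \in Ag i -> q \in Ag j -> B v (mul p q) = 0) -> v = 0.
Proof.
move=> H; have vy i y : y \in Ag i -> mul v y = 0.
  by move=> Hy; apply: form_homog_eq0 => j q Hq; rewrite formM (H _ _ _ _ Hy Hq).
apply: annihilator_homog_eq0 => i y Hy; split; first exact: vy Hy.
by apply: form_homog_eq0 => j q Hq; rewrite formM (vy _ _ Hq) formv0.
Qed.

Lemma orth_products_eq0r v :
  (forall i j p q, p \in Ag i -> q \in Ag j -> B (mul p q) v = 0) -> v = 0.
Proof.
move=> H; apply: orth_products_eq0 => i j p q Hp Hq; apply/eqP.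
by rewrite -(form_sym_eq0 _ (mul_homog Hp Hq)) (H _ _ _ _ Hp Hq).
Qed.

Section IsotropicIdeal.
Variable N : {vspace V}.
Hypotheses (iN : ideal_in mul fullv N)
  (isoN : forall x y, x \in N -> y \in N -> B x y = 0).

Let N0 := (N :&: Ag false)%VS.

Lemma isotropic_ideal_mul_eq0 x y : x \in N -> y \in N -> mul x y = 0.
Proof.
by move=> Nx Ny; apply: form_nondeg => z; rewrite formM isoN // (ideal_mulr _ iN Ny).
Qed.

Lemma isotropic_even_sub_bimodule : sub_bimodule mul (Ag false) N0.
Proof.
split=> [|a w Ha /memv_capP[Nw Aw]]; first exact: capvSr.
rewrite !memv_cap (ideal_mull _ iN Nw) (ideal_mulr _ iN Nw).
by rewrite (mul_homog Ha Aw) (mul_homog Aw Ha).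
Qed.

(* [N0] has a bimodule complement [W] in [A_0], and [N0 W], [W N0] lie in [N0 :&: W]. *)
Lemma isotropic_even_annihilates_even u a : u \in N0 -> a \in Ag false ->
  mul u a = 0 /\ mul a u = 0.
Proof.
move=> Nu0 Aa; have [Nu Au] := memv_capP Nu0.
have sb := isotropic_even_sub_bimodule.
have [W [[sW bW] [capW sumW]]] := ss sb.
have capW0 z : z \in N0 -> z \in W -> z = 0.
  by move=> Nz Wz; apply/eqP; rewrite -memv0 -capW memv_cap Nz.
move: Aa; rewrite -sumW => /memv_addP[n Nn0 [w Ww ->]].
have [Nn _] := memv_capP Nn0.
have [N0wu N0uw] := sb.2 w u (subvP sW w Ww) Nu0.
have [Wuw Wwu] := bW u w Au Ww.
rewrite mulDl mulDr (capW0 _ N0uw Wuw) (capW0 _ N0wu Wwu) !addr0.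
by rewrite !isotropic_ideal_mul_eq0.
Qed.

Lemma isotropic_even_odd_odd u q y : u \in N0 -> q \in Ag true -> y \in Ag true ->
  mul (mul q u) y = 0.
Proof.
move=> Nu0 Aq Ay; have [Nu Au] := memv_capP Nu0.
have N0w : mul (mul q u) y \in N0.
  rewrite memv_cap (ideal_mulr _ iN (ideal_mull _ iN Nu)).
  exact: mul_homog (mul_homog Aq Au) Ay.
apply: orth_products_eq0r => i [] p p' Ap Ap'; rewrite formM.
  rewrite -!am (isotropic_even_annihilates_even Nu0 (mul_homog Ap' Aq)).2.
  by rewrite mul0v formv0.
by rewrite (isotropic_even_annihilates_even N0w Ap').2 formv0.
Qed.

Lemma isotropic_even_annihilates_odd u y : u \in N0 -> y \in Ag true ->
  mul u y = 0 /\ mul y u = 0.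
Proof.
move=> Nu0; have [_ Au] := memv_capP Nu0.
have ann := isotropic_even_annihilates_even Nu0.
have uy z : z \in Ag true -> mul u z = 0.
  move=> Az; apply: orth_products_eq0 => -[] [] p q Ap Aq.
  - by rewrite -formM am (ann _ (mul_homog Az Ap)).1 form0v.
  - by rewrite -formM am (ann _ (mul_homog Az Ap)).1 form0v.
  - rewrite (form_supersym (mul_homog Au Az) (mul_homog Ap Aq)) formM -am.
    by rewrite isotropic_even_odd_odd // formv0 mulr0.
  - by rewrite (form_parity (mul_homog Au Az) (mul_homog Ap Aq)).
move=> Ay; split; first exact: uy.
apply: orth_products_eq0 => -[] [] p q Ap Aq; rewrite formM.
- by rewrite (ann _ (mul_homog Ap Aq)).1 formv0.
- by rewrite -am uy // mul0v formv0.
- by rewrite -am (ann _ Ap).1 mul0v formv0.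
- by rewrite (ann _ (mul_homog Ap Aq)).1 formv0.
Qed.

Lemma isotropic_even_eq0 u : u \in N0 -> u = 0.
Proof.
move=> Nu0; apply: annihilator_homog_eq0 => -[] y Ay.
  exact: isotropic_even_annihilates_odd.
exact: isotropic_even_annihilates_even.
Qed.

Lemma isotropic_odd_eq0 n : n \in N -> n \in Ag true -> n = 0.
Proof.
move=> Nn An.
have nodd x : x \in Ag true -> mul n x = 0 /\ mul x n = 0.
  move=> Ax; split; apply: isotropic_even_eq0; rewrite memv_cap.
    by rewrite (ideal_mulr _ iN Nn) (mul_homog An Ax).
  by rewrite (ideal_mull _ iN Nn) (mul_homog Ax An).
apply: annihilator_homog_eq0 => -[] y Ay; first exact: nodd.
split; apply: form_homog_eq0 => -[] z Az.
- rewrite formM (form_supersym An (mul_homog Ay Az)) formM (nodd _ Az).2.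
  by rewrite formv0 mulr0.
- by rewrite (form_parity (mul_homog An Ay) Az).
- by rewrite formM (nodd _ Az).1 formv0.
- by rewrite (form_parity (mul_homog Ay An) Az).
Qed.

End IsotropicIdeal.

Lemma isotropic_graded_ideal_eq0 N : graded Ag N -> ideal_in mul fullv N ->
  (forall x y, x \in N -> y \in N -> B x y = 0) -> N = 0%VS.
Proof.
move=> gN iN isoN; apply/eqP; rewrite -subv0; apply/subvP => x.
rewrite memv0 => Nx; apply/eqP; move: x Nx.
apply: (graded_ind (P := fun x => x = 0)) gN _ _ => [x y -> -> | [] n Nn An].
- by rewrite addr0.
- exact: (isotropic_odd_eq0 iN isoN Nn An).
- by apply: (isotropic_even_eq0 iN isoN); rewrite memv_cap Nn.
Qed.

(* The left orthogonal [{x | B x W = 0}], presented as the kernel of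
   [x |-> (B x w_i)_i] for a basis [(w_i)] of [W] so that it is a subspace. *)
Definition orth_row (W : {vspace V}) (x : V) : 'rV[K]_(\dim W) :=
  \row_(i < \dim W) B x (vbasis W)`_i.

Lemma orth_row_is_linear W : linear (orth_row W).
Proof. by move=> a x y; apply/rowP => i; rewrite !mxE es.1.1. Qed.

HB.instance Definition _ W :=
  GRing.isLinear.Build K V 'rV[K]_(\dim W) _ (orth_row W) (orth_row_is_linear W).

Definition orthv (W : {vspace V}) : {vspace V} := lker (linfun (orth_row W)).

Lemma memv_orth W x : x \in orthv W <-> (forall w, w \in W -> B x w = 0).
Proof.
rewrite memv_ker lfunE; split=> [/eqP xW w Ww | xW].
  rewrite (coord_vbasis Ww) (big_morph (B x) (formDr x) (formv0 x)) big1 // => i _.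
  have := congr1 (fun M : 'rV_(\dim W) => M 0 i) xW.
  by rewrite !mxE formvZ => ->; rewrite mulr0.
apply/eqP/rowP => i; rewrite !mxE; apply: xW.
by apply: vbasis_mem; apply: mem_nth; rewrite size_tuple.
Qed.

Lemma dimv_cap_orth W U : (\dim U <= \dim (U :&: orthv W) + \dim W)%N.
Proof.
rewrite -{1}(limg_ker_dim (linfun (orth_row W)) U) leq_add2l.
by apply: leq_trans (dimvS (subvf _)) _; rewrite dimvf /dim /= mul1n.
Qed.

Lemma memv_orth_sym W x : graded Ag W ->
  x \in orthv W <-> (forall w, w \in W -> B w x = 0).
Proof.
move=> gW; rewrite memv_orth; split=> xW.
  apply: (graded_ind (P := fun w => B w x = 0)) gW _ _ => [w w' wx w'x|i w Ww Aw].
    by rewrite formDl wx w'x addr0.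
  by apply/eqP; rewrite (form_sym_eq0 _ Aw) xW.
apply: (graded_ind (P := fun w => B x w = 0)) gW _ _ => [w w' xw xw'|i w Ww Aw].
  by rewrite formDr xw xw' addr0.
by apply/eqP; rewrite -(form_sym_eq0 _ Aw) xW.
Qed.

Lemma graded_orth W : graded Ag W -> graded Ag (orthv W).
Proof.
move=> gW; apply/gradedP => i x /memv_orth xW; apply/memv_orth.
apply: (graded_ind (P := fun w => B (hcomp i x) w = 0)) gW _ _
  => [w w' xw xw' | j w Ww Aw].
  by rewrite formDr xw xw' addr0.
have [-> | ij] := eqVneq i j; first by rewrite -(form_hcompl _ Aw) xW.
exact: form_parity (memv_hcomp i x) Aw ij.
Qed.

Lemma graded_cap I J : graded Ag I -> graded Ag J -> graded Ag (I :&: J).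
Proof.
move=> /gradedP gI /gradedP gJ; apply/gradedP => i x /memv_capP[Ix Jx].
by rewrite memv_cap gI ?gJ.
Qed.

Lemma ideal_cap I J : ideal_in mul fullv I -> ideal_in mul fullv J ->
  ideal_in mul fullv (I :&: J).
Proof.
move=> iI iJ a x _ /memv_capP[Ix Jx].
rewrite !memv_cap (ideal_mull _ iI Ix) (ideal_mulr _ iI Ix).
by rewrite (ideal_mull _ iJ Jx) (ideal_mulr _ iJ Jx).
Qed.

Lemma ideal_orth W : graded Ag W -> ideal_in mul fullv W ->
  ideal_in mul fullv (orthv W).
Proof.
move=> gW iW a x _ Ox; split.
  apply/(memv_orth_sym _ gW) => w Ww; rewrite -formM.
  exact: (memv_orth_sym _ gW).1 Ox _ (ideal_mulr a iW Ww).
apply/memv_orth => w Ww; rewrite formM.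
exact: (memv_orth _ _).1 Ox _ (ideal_mull a iW Ww).
Qed.

Lemma graded_ideal_nondeg I : graded Ag I -> ideal_in mul fullv I -> nondeg_on B I.
Proof.
move=> gI iI x Ix xI.
have IO0 : (I :&: orthv I)%VS = 0%VS.
  apply: isotropic_graded_ideal_eq0; first exact: graded_cap (graded_orth gI).
    exact: ideal_cap (ideal_orth gI iI).
  by move=> y z /memv_capP[_ /memv_orth yI] /memv_capP[Iz _]; apply: yI.
by apply/eqP; rewrite -memv0 -IO0 memv_cap Ix; apply/memv_orth.
Qed.

Lemma nondeg_cap_orth W : nondeg_on B W -> (W :&: orthv W)%VS = 0%VS.
Proof.
move=> nW; apply/eqP; rewrite -subv0.
apply/subvP => x /memv_capP[Wx /memv_orth xW].
by rewrite memv0 (nW x Wx xW).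
Qed.

Lemma nondeg_add_orth W I : (W <= I)%VS -> nondeg_on B W ->
  (W + I :&: orthv W)%VS = I /\ (W :&: (I :&: orthv W))%VS = 0%VS.
Proof.
move=> sWI nW; have cap0 : (W :&: (I :&: orthv W))%VS = 0%VS.
  apply/eqP; rewrite -subv0 -(nondeg_cap_orth nW).
  exact: capvS (subvv W) (capvSr I _).
split=> //; apply/eqP; rewrite eqEdim subv_add sWI capvSl /=.
by rewrite dimv_disjoint_sum // addnC dimv_cap_orth.
Qed.

Lemma graded_ideal_orth_mul_eq0 J x y : graded Ag J -> ideal_in mul fullv J ->
  x \in J -> y \in orthv J -> mul x y = 0 /\ mul y x = 0.
Proof.
move=> gJ iJ Jx Oy; have cap0 := nondeg_cap_orth (graded_ideal_nondeg gJ iJ).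
have iO := ideal_orth gJ iJ.
split; apply/eqP; rewrite -memv0 -cap0 memv_cap.
  by rewrite (ideal_mulr _ iJ Jx) (ideal_mull _ iO Oy).
by rewrite (ideal_mull _ iJ Jx) (ideal_mulr _ iO Oy).
Qed.

Lemma graded_ideal_add_orth J : graded Ag J -> ideal_in mul fullv J ->
  (J + orthv J)%VS = fullv.
Proof.
move=> gJ iJ; have [] := nondeg_add_orth (subvf J) (graded_ideal_nondeg gJ iJ).
by rewrite capfv.
Qed.

Lemma graded_ideal_sub_ideal J Y : graded Ag J -> ideal_in mul fullv J ->
  (Y <= J)%VS -> ideal_in mul J Y -> ideal_in mul fullv Y.
Proof.
move=> gJ iJ sYJ iY a y _ Yy.
have : a \in (J + orthv J)%VS by rewrite graded_ideal_add_orth ?memvf.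
case/memv_addP=> j Jj [j' Oj' ->].
have [yj' j'y] := graded_ideal_orth_mul_eq0 gJ iJ (subvP sYJ y Yy) Oj'.
by rewrite mulDl mulDr yj' j'y !addr0; apply: iY.
Qed.

Definition nonzero_graded_ideal (I : {vspace V}) : Prop :=
  [/\ graded Ag I, ideal_in mul fullv I & I != 0%VS].

Lemma minimal_graded_ideal_simple J : nonzero_graded_ideal J ->
  (forall Y, nonzero_graded_ideal Y -> (Y <= J)%VS -> Y = J) -> simple_in mul Ag J.
Proof.
move=> [gJ iJ nzJ] minJ; split.
  have /subvPn[x Jx] : ~~ (J <= 0)%VS by rewrite subv0.
  rewrite memv0 => /eqP nx; apply: NNPP => noprod; apply: nx; apply: ta => y.
  have JJ0 a b : a \in J -> b \in J -> mul a b = 0.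
    move=> Ja Jb; apply: NNPP => ab; apply: noprod; exists a, b; split=> //.
    exact/eqP.
  have : y \in (J + orthv J)%VS by rewrite graded_ideal_add_orth ?memvf.
  case/memv_addP=> j Jj [j' Oj' ->].
  have [xj' j'x] := graded_ideal_orth_mul_eq0 gJ iJ Jx Oj'.
  by rewrite mulDl mulDr xj' j'x !JJ0 // !addr0.
move=> Y sYJ gY iYJ; have [-> | nzY] := eqVneq Y 0%VS; [by left | right].
have iY := graded_ideal_sub_ideal gJ iJ sYJ iYJ.
exact: minJ (And3 gY iY nzY) sYJ.
Qed.

Definition orth_simple_decomposition (I : {vspace V}) m (Ak : 'I_m -> {vspace V}) :=
  [/\ (forall k : 'I_m,
         [/\ graded Ag (Ak k), ideal_in mul fullv (Ak k),
             simple_in mul Ag (Ak k) & nondeg_on B (Ak k)]),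
      (forall (i j : 'I_m) (x y : V), i != j -> x \in Ak i -> y \in Ak j ->
         B x y = 0),
      directv (\sum_(k < m) Ak k)%VS
    & (\sum_(k < m) Ak k)%VS = I].

Lemma orth_simple_decomposition_cons I J m (Ak : 'I_m -> {vspace V}) :
  graded Ag J -> ideal_in mul fullv J -> simple_in mul Ag J -> (J <= I)%VS ->
  orth_simple_decomposition (I :&: orthv J) Ak ->
  orth_simple_decomposition I (fun k : 'I_m.+1 => oapp Ak J (unlift ord0 k)).
Proof.
move=> gJ iJ sJ sJI [dAk orthAk dirAk sumAk].
have [addJ capJ] := nondeg_add_orth sJI (graded_ideal_nondeg gJ iJ).
have sAkJ k : (Ak k <= orthv J)%VS.
  by apply: subv_trans (capvSr I _); rewrite -sumAk (sumv_sup k).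
set F := fun k : 'I_m.+1 => oapp Ak J (unlift ord0 k).
have sumF : (\sum_(k < m.+1) F k = J + \sum_(k < m) Ak k)%VS.
  rewrite big_ord_recl /F unlift_none /=; congr (_ + _)%VS.
  by apply: eq_bigr => k _; rewrite liftK.
split.
- move=> k; rewrite /F; case: (unliftP ord0 k) => [k' _|_] /=; first exact: dAk.
  by split=> //; apply: graded_ideal_nondeg.
- move=> i j x y; rewrite /F.
  case: (unliftP ord0 i) => [i' ->|->]; case: (unliftP ord0 j) => [j' ->|->] //=.
  + by rewrite (inj_eq lift_inj); apply: orthAk.
  + by move=> _ /(subvP (sAkJ i')) /memv_orth; apply.
  + by move=> _ Jx /(subvP (sAkJ j')) /(memv_orth_sym _ gJ); apply.
- move: dirAk; rewrite !directvE /= sumF => /eqP dirAk.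
  rewrite big_ord_recl /F unlift_none /=.
  rewrite (eq_bigr (fun k => \dim (Ak k))) => [|k _]; last by rewrite liftK.
  by rewrite dimv_disjoint_sum ?dirAk // sumAk.
- by rewrite sumF sumAk addJ.
Qed.

Lemma graded_ideal_orth_simple_decomposition I :
  graded Ag I -> ideal_in mul fullv I ->
  exists m (Ak : 'I_m -> {vspace V}), orth_simple_decomposition I Ak.
Proof.
have [n] := ubnP (\dim I); elim: n I => // n IH I ltIn gI iI.
have [-> | nzI] := eqVneq I 0%VS.
  exists 0, (fun _ => 0%VS); split; [by case | by case | | by rewrite big_ord0].
  by apply/directv_sumP => -[].
have [J [sJI [gJ iJ nzJ] minJ]] :=
  minimal_subv_exists (P := nonzero_graded_ideal) (And3 gI iI nzI).
have [addJ capJ] := nondeg_add_orth sJI (graded_ideal_nondeg gJ iJ).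
have ltJ' : (\dim (I :&: orthv J) < n)%N.
  apply: (leq_trans _ (ltnSE ltIn)); rewrite -{2}addJ dimv_disjoint_sum //.
  by rewrite -{1}[\dim (I :&: _)]add0n ltn_add2r lt0n dimv_eq0.
have [m [Ak dAk]] :=
  IH _ ltJ' (graded_cap gI (graded_orth gJ)) (ideal_cap iI (ideal_orth gJ iJ)).
exists m.+1, (fun k => oapp Ak J (unlift ord0 k)).
apply: orth_simple_decomposition_cons dAk => //.
exact: minimal_graded_ideal_simple.
Qed.

End Decomposition.

Theorem mainTheorem14 (K : closedFieldType) (V : vectType K)
    (mul : V -> V -> V) (Ag : bool -> {vspace V}) (B : V -> V -> K) :
  [pchar K] =i pred0 ->
  bilinear_mul mul -> assoc_mul mul -> is_grading mul Ag ->
  even_symmetric mul Ag B ->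
  semisimple_even_part mul (Ag false) ->
  trivial_annihilator mul ->
  exists (m : nat) (Ak : 'I_m -> {vspace V}),
    [/\ (forall k : 'I_m,
           [/\ graded Ag (Ak k), ideal_in mul fullv (Ak k),
               simple_in mul Ag (Ak k) & nondeg_on B (Ak k)]),
        (forall (i j : 'I_m) (x y : V), i != j -> x \in Ak i -> y \in Ak j ->
           B x y = 0),
        directv (\sum_(k < m) Ak k)%VS
      & (\sum_(k < m) Ak k)%VS = fullv].
Proof.
move=> _ bm am gr es ss ta.
apply: (graded_ideal_orth_simple_decomposition bm am gr es ss ta).
  exact: graded_fullv gr.
by move=> a x _ _; rewrite !memvf.
Qed.
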